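(* Let $X$ be a real Hilbert space, $I$ a finite index set, and $(T_i)_{i\in I}$ a family of operators $X\to X$ such that each $T_i$ is averaged nonexpansive and boundedly linearly regular. Set $Z_i=\operatorname{Fix}T_i$ and suppose $Z=\bigcap_{i\in I}Z_i\neq\varnothing$ and that the family $(Z_i)_{i\in I}$ is boundedly linearly regular. Let $(\omega_{i,n})_{(i,n)\in I\times\mathbb N}$ satisfy $\omega_{i,n}\in[0,1]$ and $\sum_{i\in I}\omega_{i,n}=1$ for every $n\in\mathbb N$. Set $I_n=\{i\in I:\omega_{i,n}>0\}$ and suppose $\omega_+=\inf_{n\in\mathbb N}\min_{i\in I_n}\omega_{i,n}>0$. Suppose there is $p\in\{1,2,\dots\}$ such that $I_n\cup I_{n+1}\cup\cdots\cup I_{n+p-1}=I$ for all $n\in\mathbb N$. Let $x_0\in X$ and define $x_{n+1}=\sum_{i\in I}\omega_{i,n}T_ix_n$. Then $(x_n)_{n\in\mathbb N}$ converges linearly to some point of $Z$.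
   Context: $T\colon X\to X$ is averaged nonexpansive if $T=(1-\lambda)\mathrm{Id}+\lambda N$ for some $\lambda\in[0,1[$ and some nonexpansive $N\colon X\to X$. An operator $T$ with $\operatorname{Fix}T\neq\varnothing$ is boundedly linearly regular if for every $\rho>0$ there is $\kappa\ge0$ with $d_{\operatorname{Fix}T}(x)\le\kappa\|x-Tx\|$ for all $x$ with $\|x\|\le\rho$. A finite family $(C_i)_{i\in I}$ of closed convex sets with $C=\bigcap_i C_i\ne\varnothing$ is boundedly linearly regular if for every $\rho>0$ there is $\mu>0$ with $d_C(x)\le\mu\max_{i\in I}d_{C_i}(x)$ for all $\|x\|\le\rho$. Here $d_C$ denotes the distance function to $C$. A sequence $(x_n)$ converges linearly to $\bar x$ if there are $c\ge0$ and $q\in[0,1[$ with $\|x_n-\bar x\|\le cq^n$ for all $n$. *)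

From Stdlib Require Import Reals Lra Lia ClassicalEpsilon.
Open Scope R_scope.

Record Hilbert := {
  hcar :> Type;
  hzero : hcar;
  hadd : hcar -> hcar -> hcar;
  hopp : hcar -> hcar;
  hscal : R -> hcar -> hcar;
  hinner : hcar -> hcar -> R;
  hadd_assoc : forall x y z, hadd x (hadd y z) = hadd (hadd x y) z;
  hadd_comm : forall x y, hadd x y = hadd y x;
  hadd_zero : forall x, hadd x hzero = x;
  hadd_opp : forall x, hadd x (hopp x) = hzero;
  hscal_one : forall x, hscal 1 x = x;
  hscal_assoc : forall a b x, hscal a (hscal b x) = hscal (a * b) x;
  hscal_distr_l : forall a x y, hscal a (hadd x y) = hadd (hscal a x) (hscal a y);
  hscal_distr_r : forall a b x, hscal (a + b) x = hadd (hscal a x) (hscal b x);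
  hinner_sym : forall x y, hinner x y = hinner y x;
  hinner_add_l : forall x y z, hinner (hadd x y) z = hinner x z + hinner y z;
  hinner_scal_l : forall a x y, hinner (hscal a x) y = a * hinner x y;
  hinner_pos : forall x, 0 <= hinner x x;
  hinner_def : forall x, hinner x x = 0 -> x = hzero;
  hcomplete : forall u : nat -> hcar,
    (forall eps, eps > 0 -> exists N, forall m n, (m >= N)%nat -> (n >= N)%nat ->
        sqrt (hinner (hadd (u m) (hopp (u n))) (hadd (u m) (hopp (u n)))) < eps) ->
    exists l, forall eps, eps > 0 -> exists N, forall n, (n >= N)%nat ->
        sqrt (hinner (hadd (u n) (hopp l)) (hadd (u n) (hopp l))) < eps
}.

Section Ops.
Variable X : Hilbert.

Definition hsub (x y : X) : X := hadd X x (hopp X y).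
Definition hnorm (x : X) : R := sqrt (hinner X x x).

Definition Fix (T : X -> X) : X -> Prop := fun x => T x = x.

Definition nonexpansive (N : X -> X) : Prop :=
  forall x y, hnorm (hsub (N x) (N y)) <= hnorm (hsub x y).

Definition averaged_nonexpansive (T : X -> X) : Prop :=
  exists (lam : R) (N : X -> X), 0 <= lam < 1 /\ nonexpansive N /\
    forall x, T x = hadd X (hscal X (1 - lam) x) (hscal X lam (N x)).

(** Distance function d_C(x) = inf { ||x - c|| : c in C }
    (chosen via epsilon; it is the infimum whenever C is nonempty). *)
Definition dist (C : X -> Prop) (x : X) : R :=
  epsilon (inhabits 0)
    (fun d => (forall c, C c -> d <= hnorm (hsub x c)) /\
              (forall e, (forall c, C c -> e <= hnorm (hsub x c)) -> e <= d)).

Definition bdd_lin_regular_op (T : X -> X) : Prop :=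
  (exists z, Fix T z) /\
  forall rho, rho > 0 -> exists kappa, kappa >= 0 /\
    forall x, hnorm x <= rho -> dist (Fix T) x <= kappa * hnorm (hsub x (T x)).

(** Finite index set I = {0, ..., m-1}. *)
Definition inter_fam (m : nat) (C : nat -> X -> Prop) : X -> Prop :=
  fun x => forall i, (i < m)%nat -> C i x.

(** max_{i < m} f i  (with value 0 for m = 0; used on nonnegative f). *)
Fixpoint max_fin (m : nat) (f : nat -> R) : R :=
  match m with
  | O => 0
  | S k => Rmax (max_fin k f) (f k)
  end.

Definition bdd_lin_regular_fam (m : nat) (C : nat -> X -> Prop) : Prop :=
  forall rho, rho > 0 -> exists mu, mu > 0 /\
    forall x, hnorm x <= rho ->
      dist (inter_fam m C) x <= mu * max_fin m (fun i => dist (C i) x).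

Fixpoint vsum (m : nat) (f : nat -> X) : X :=
  match m with
  | O => hzero X
  | S k => hadd X (vsum k f) (f k)
  end.

Fixpoint rsum (m : nat) (f : nat -> R) : R :=
  match m with
  | O => 0
  | S k => rsum k f + f k
  end.

End Ops.

Arguments hsub {X}. Arguments hnorm {X}. Arguments Fix {X}.
Arguments nonexpansive {X}. Arguments averaged_nonexpansive {X}.
Arguments dist {X}. Arguments bdd_lin_regular_op {X}.
Arguments inter_fam {X}. Arguments bdd_lin_regular_fam {X}.
Arguments vsum {X}.

(* An averaged operator T_i is strongly quasi-nonexpansive:
   |T_i x - z|^2 <= |x - z|^2 - c |x - T_i x|^2 for every fixed point z.  Averaging, the
   iteration is Fejer monotone with respect to Z and loses c times the weighted mean squared
   residual at every step.  Within any window of p steps every operator is active with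
   weight at least omega_+, so bounded linear regularity (of each T_i, then of the family)
   bounds d_Z(x_n) by the residuals in the window, i.e. by the Fejer decrease over the
   window: d_Z(x_n)^2 <= K (|x_n - z|^2 - |x_(n+p) - z|^2) for all z in Z.  Taking the
   infimum over z yields d_Z(x_(n+p)) <= r d_Z(x_n) with r < 1, so d_Z(x_n) decays
   geometrically, and a Fejer monotone sequence with that property converges linearly to a
   point of the closed set Z. *)

From Pilot Require Import Defs.
From Stdlib Require Import Reals Lra Lia Psatz Arith ClassicalEpsilon.
Open Scope R_scope.
(* [Reals] exports an unrelated metric-space [dist]. *)
Local Notation dist := Defs.dist.

Section HilbertAlgebra.
Variable X : Hilbert.
Local Notation add := (hadd X).
Local Notation opp := (hopp X).
Local Notation scal := (hscal X).
Local Notation inner := (hinner X).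
Local Notation zero := (hzero X).

Lemma inner_zero_l (y : X) : inner zero y = 0.
Proof.
  assert (H : inner (add zero zero) y = inner zero y) by (rewrite hadd_zero; reflexivity).
  rewrite hinner_add_l in H. lra.
Qed.

Lemma inner_opp_l (x y : X) : inner (opp x) y = - inner x y.
Proof.
  assert (H : inner (add x (opp x)) y = 0) by (rewrite hadd_opp; apply inner_zero_l).
  rewrite hinner_add_l in H. lra.
Qed.

Lemma inner_add_r (x y z : X) : inner x (add y z) = inner x y + inner x z.
Proof. rewrite hinner_sym, hinner_add_l, !(hinner_sym X _ x). reflexivity. Qed.

Lemma inner_scal_r a (x y : X) : inner x (scal a y) = a * inner x y.
Proof. rewrite hinner_sym, hinner_scal_l, (hinner_sym X y). reflexivity. Qed.

Lemma hilbert_ext (a b : X) : (forall w, inner a w = inner b w) -> a = b.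
Proof.
  intros H.
  assert (Hd : add a (opp b) = zero).
  { apply hinner_def. rewrite hinner_add_l, inner_opp_l, !H. ring. }
  rewrite <- (hadd_zero X a), <- (hadd_opp X b), hadd_assoc, (hadd_comm X a b),
    <- hadd_assoc, Hd, hadd_zero. reflexivity.
Qed.

End HilbertAlgebra.

(* Testing against an arbitrary vector turns identities in [X] into ring identities. *)
Ltac vector_eq :=
  apply hilbert_ext; intro; unfold hsub;
  repeat rewrite ?hinner_add_l, ?hinner_scal_l, ?inner_opp_l, ?inner_zero_l; ring.

Section Norm.
Variable X : Hilbert.
Local Notation add := (hadd X).
Local Notation scal := (hscal X).
Local Notation inner := (hinner X).

Lemma hnorm_nonneg (v : X) : 0 <= hnorm v.
Proof. apply sqrt_pos. Qed.

Lemma hnorm_sq (v : X) : hnorm v ^ 2 = inner v v.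
Proof. apply pow2_sqrt, hinner_pos. Qed.

Lemma hnorm_le_of_sq (a : X) (r : R) : 0 <= r -> hnorm a ^ 2 <= r ^ 2 -> hnorm a <= r.
Proof.
  intros Hr H. rewrite <- (sqrt_pow2 r Hr). unfold hnorm. apply sqrt_le_1_alt.
  rewrite <- hnorm_sq. exact H.
Qed.

Lemma hnorm_zero : hnorm (hzero X) = 0.
Proof. unfold hnorm. rewrite inner_zero_l. apply sqrt_0. Qed.

Lemma hnorm_scal a (v : X) : hnorm (scal a v) = Rabs a * hnorm v.
Proof.
  unfold hnorm. rewrite hinner_scal_l, hinner_sym, hinner_scal_l, <- Rmult_assoc.
  rewrite sqrt_mult_alt by nra. rewrite <- sqrt_Rsqr_abs. reflexivity.
Qed.

Lemma hnorm_eq0 (v : X) : hnorm v = 0 -> v = hzero X.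
Proof. intros H. apply hinner_def. rewrite <- hnorm_sq, H. ring. Qed.

Lemma cauchy_schwarz (x y : X) : inner x y <= hnorm x * hnorm y.
Proof.
  set (a := hnorm x); set (b := hnorm y).
  pose proof (hinner_pos X (add (scal b x) (scal (- a) y))) as Hq.
  rewrite hinner_add_l, !inner_add_r, !hinner_scal_l, !inner_scal_r in Hq.
  rewrite (hinner_sym X y x), <- (hnorm_sq x), <- (hnorm_sq y) in Hq. fold a b in Hq.
  destruct (Req_dec (a * b) 0) as [Hab|Hab].
  - destruct (Rmult_integral _ _ Hab) as [Ha|Hb].
    + rewrite (hnorm_eq0 x Ha), inner_zero_l. lra.
    + rewrite (hinner_sym X x y), (hnorm_eq0 y Hb), inner_zero_l. lra.
  - assert (0 < a * b) by (pose proof (hnorm_nonneg x); pose proof (hnorm_nonneg y);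
      unfold a, b in *; nra).
    nra.
Qed.

Lemma hnorm_triangle (x y : X) : hnorm (add x y) <= hnorm x + hnorm y.
Proof.
  apply hnorm_le_of_sq; [pose proof (hnorm_nonneg x); pose proof (hnorm_nonneg y); lra|].
  rewrite hnorm_sq, hinner_add_l, !inner_add_r, (hinner_sym X y x).
  pose proof (cauchy_schwarz x y). rewrite <- (hnorm_sq x), <- (hnorm_sq y). nra.
Qed.

Lemma hnorm_sub_sym (a b : X) : hnorm (hsub a b) = hnorm (hsub b a).
Proof.
  replace (hsub b a) with (scal (-1) (hsub a b)) by vector_eq.
  rewrite hnorm_scal, Rabs_left by lra. ring.
Qed.

Lemma hnorm_sub_triangle (a b c : X) :
  hnorm (hsub a c) <= hnorm (hsub a b) + hnorm (hsub b c).
Proof. replace (hsub a c) with (add (hsub a b) (hsub b c)) by vector_eq. apply hnorm_triangle. Qed.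

Lemma hnorm_sub_eq0 (a b : X) : hnorm (hsub a b) = 0 -> a = b.
Proof.
  intros H. apply hilbert_ext. intro w.
  pose proof (f_equal (fun v => inner v w) (hnorm_eq0 _ H)) as Hw. cbn beta in Hw.
  unfold hsub in Hw. rewrite hinner_add_l, inner_opp_l, inner_zero_l in Hw. lra.
Qed.

Lemma hnorm_vsum (m : nat) (f : nat -> X) :
  hnorm (vsum m f) <= rsum m (fun i => hnorm (f i)).
Proof.
  induction m as [|k IH]; cbn [vsum rsum].
  - rewrite hnorm_zero. lra.
  - eapply Rle_trans; [apply hnorm_triangle|]. lra.
Qed.

Lemma hsub_vsum (m : nat) (w : nat -> R) (v : nat -> X) (z : X) :
  hsub (vsum m (fun i => scal (w i) (v i))) (scal (rsum m w) z) =
  vsum m (fun i => scal (w i) (hsub (v i) z)).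
Proof. induction m as [|k IH]; cbn [vsum rsum]; [|rewrite <- IH]; vector_eq. Qed.
End Norm.

Lemma uniform_constant (m : nat) (P : nat -> R -> Prop) (a0 : R) :
  (forall i a b, a <= b -> P i a -> P i b) ->
  (forall i, (i < m)%nat -> exists a, P i a) ->
  exists a, a0 <= a /\ forall i, (i < m)%nat -> P i a.
Proof.
  intros Hmono. induction m as [|k IH]; intros H.
  - exists a0. split; [lra|]. intros i Hi. lia.
  - destruct IH as [a1 [Ha1 H1]]; [intros i Hi; apply H; lia|].
    destruct (H k (Nat.lt_succ_diag_r k)) as [a2 H2].
    exists (Rmax a1 a2). split; [eapply Rle_trans; [exact Ha1|apply Rmax_l]|]. intros i Hi.
    destruct (Nat.eq_dec i k) as [->|Hne].
    + exact (Hmono k a2 _ (Rmax_r a1 a2) H2).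
    + exact (Hmono i a1 _ (Rmax_l a1 a2) (H1 i ltac:(lia))).
Qed.

Section Averaged.
Variable X : Hilbert.
Local Notation add := (hadd X).
Local Notation scal := (hscal X).

Definition strongly_quasi_nonexpansive (c : R) (T : X -> X) : Prop :=
  forall x z, Fix T z ->
    hnorm (hsub (T x) z) ^ 2 <= hnorm (hsub x z) ^ 2 - c * hnorm (hsub x (T x)) ^ 2.

Lemma strongly_quasi_nonexpansive_le c c' T :
  c' <= c -> strongly_quasi_nonexpansive c T -> strongly_quasi_nonexpansive c' T.
Proof.
  intros Hc H x z Hz. specialize (H x z Hz).
  assert (0 <= (c - c') * hnorm (hsub x (T x)) ^ 2)
    by (apply Rmult_le_pos; [lra|apply pow2_ge_0]).
  lra.
Qed.

Lemma strongly_quasi_nonexpansive_dist c T :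
  0 <= c -> strongly_quasi_nonexpansive c T ->
  forall x z, Fix T z -> hnorm (hsub (T x) z) <= hnorm (hsub x z).
Proof.
  intros Hc H x z Hz. apply hnorm_le_of_sq; [apply hnorm_nonneg|].
  specialize (H x z Hz).
  assert (0 <= c * hnorm (hsub x (T x)) ^ 2) by (apply Rmult_le_pos; [lra|apply pow2_ge_0]).
  lra.
Qed.

(* For T = (1 - l) Id + l N and N z = z one has
   T x - z = (1 - l) u + l v and x - T x = l (u - v) with u = x - z, v = N x - z;
   the claim with c = 1 - l is then the convexity identity plus |v| <= |u|. *)
Lemma averaged_strongly_quasi_nonexpansive T :
  averaged_nonexpansive T -> exists c, 0 < c /\ strongly_quasi_nonexpansive c T.
Proof.
  intros [l [N [Hl [HN HT]]]]. exists (1 - l). split; [lra|].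
  intros x z Hz. unfold Fix in Hz.
  set (u := hsub x z). set (v := hsub (N x) z).
  assert (E1 : hsub (T x) z = add (scal (1 - l) u) (scal l v))
    by (unfold u, v; rewrite HT; vector_eq).
  assert (E2 : hsub x (T x) = add (scal l u) (scal (- l) v))
    by (unfold u, v; rewrite HT; vector_eq).
  assert (Hvu : l * hnorm v ^ 2 <= l * hnorm u ^ 2).
  { destruct (Req_dec l 0) as [->|Hl0]; [lra|].
    assert (HNz : N z = z).
    { apply hilbert_ext. intro w.
      assert (H1 : hinner X (T z) w = hinner X z w) by (rewrite Hz; reflexivity).
      rewrite HT, hinner_add_l, !hinner_scal_l in H1.
      assert (H0 : l * (hinner X (N z) w - hinner X z w) = 0) by lra.
      apply Rmult_integral in H0. lra. }
    pose proof (HN x z) as Hne. rewrite HNz in Hne. fold u v in Hne.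
    pose proof (hnorm_nonneg X v).
    apply Rmult_le_compat_l; [lra|]. nra. }
  pose proof (hinner_pos X (add u (scal (-1) v))) as Huv.
  rewrite E1, E2, !hnorm_sq.
  rewrite !hnorm_sq in Hvu.
  repeat rewrite ?hinner_add_l, ?inner_add_r, ?hinner_scal_l, ?inner_scal_r in *.
  rewrite (hinner_sym X v u) in *.
  set (U := hinner X u u) in *. set (V := hinner X v v) in *. set (B := hinner X u v) in *.
  assert (0 <= l * (1 - l) * (1 - l) * (U - 2 * B + V))
    by (repeat apply Rmult_le_pos; lra).
  nra.
Qed.

(* Strong quasi-nonexpansiveness weakens as c decreases, so the constants are merged
   through their reciprocals. *)
Lemma averaged_family_uniform (m : nat) (T : nat -> X -> X) :
  (forall i, (i < m)%nat -> averaged_nonexpansive (T i)) ->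
  exists c, 0 < c /\ forall i, (i < m)%nat -> strongly_quasi_nonexpansive c (T i).
Proof.
  intros H.
  destruct (uniform_constant m
     (fun i s => 0 < s /\ strongly_quasi_nonexpansive (/ s) (T i)) 1) as [s [Hs1 Hs]].
  - intros i a b Hab [Ha HTa]. split; [lra|].
    apply (strongly_quasi_nonexpansive_le (/ a)); [apply Rinv_le_contravar; lra|exact HTa].
  - intros i Hi. destruct (averaged_strongly_quasi_nonexpansive _ (H i Hi)) as [c [Hc HTc]].
    exists (/ c). rewrite Rinv_inv. split; [apply Rinv_0_lt_compat|]; assumption.
  - exists (/ s). split; [apply Rinv_0_lt_compat; lra|].
    intros i Hi. apply (Hs i Hi).
Qed.
End Averaged.

Section Distance.
Variable X : Hilbert.
Variable C : X -> Prop.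
Hypothesis C_nonempty : exists c, C c.

Lemma dist_spec (x : X) :
  (forall c, C c -> dist C x <= hnorm (hsub x c)) /\
  (forall e, (forall c, C c -> e <= hnorm (hsub x c)) -> e <= dist C x).
Proof.
  destruct C_nonempty as [c0 Hc0]. unfold dist. apply epsilon_spec.
  set (E := fun y => exists c, C c /\ y = - hnorm (hsub x c)).
  assert (Hb : bound E).
  { exists 0. intros y [c [_ ->]]. pose proof (hnorm_nonneg X (hsub x c)). lra. }
  destruct (completeness E Hb (ex_intro _ _ (ex_intro _ c0 (conj Hc0 eq_refl))))
    as [l [Hub Hlub]].
  exists (- l). split.
  - intros c Hc. assert (- hnorm (hsub x c) <= l) by (apply Hub; exists c; auto). lra.
  - intros e He. assert (l <= - e).
    { apply Hlub. intros y [c [Hc ->]]. specialize (He c Hc). lra. }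
    lra.
Qed.

Lemma dist_le (x c : X) : C c -> dist C x <= hnorm (hsub x c).
Proof. apply (proj1 (dist_spec x)). Qed.

Lemma dist_glb (x : X) (e : R) :
  (forall c, C c -> e <= hnorm (hsub x c)) -> e <= dist C x.
Proof. apply (proj2 (dist_spec x)). Qed.

Lemma dist_nonneg (x : X) : 0 <= dist C x.
Proof. apply dist_glb. intros. apply hnorm_nonneg. Qed.

Lemma dist_lipschitz (x y : X) : dist C y <= hnorm (hsub y x) + dist C x.
Proof.
  assert (dist C y - hnorm (hsub y x) <= dist C x); [|lra].
  apply dist_glb. intros c Hc.
  pose proof (dist_le y c Hc). pose proof (hnorm_sub_triangle X y x c). lra.
Qed.

Lemma dist_sq_glb (x : X) (a : R) :
  0 <= a -> (forall c, C c -> a <= hnorm (hsub x c) ^ 2) -> a <= dist C x ^ 2.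
Proof.
  intros Ha H. rewrite <- (pow2_sqrt a Ha). apply pow_incr. split; [apply sqrt_pos|].
  apply dist_glb. intros c Hc. rewrite <- (sqrt_pow2 _ (hnorm_nonneg X (hsub x c))).
  apply sqrt_le_1_alt, H, Hc.
Qed.

(* Quasi-nonexpansiveness forces |T l - l| <= 2 |l - z| for every z in C. *)
Lemma fix_of_dist_eq0 (T : X -> X) (l : X) :
  (forall y z, C z -> hnorm (hsub (T y) z) <= hnorm (hsub y z)) ->
  dist C l = 0 -> T l = l.
Proof.
  intros HT Hl. apply hnorm_sub_eq0, Rle_antisym; [|apply hnorm_nonneg].
  assert (/ 2 * hnorm (hsub (T l) l) <= dist C l); [|lra].
  apply dist_glb. intros z Hz.
  pose proof (HT l z Hz). pose proof (hnorm_sub_triangle X (T l) z l).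
  rewrite (hnorm_sub_sym X z l) in *. lra.
Qed.
End Distance.

Lemma rsum_le m f g : (forall i, (i < m)%nat -> f i <= g i) -> rsum m f <= rsum m g.
Proof.
  induction m as [|m IH]; intros H; cbn [rsum]; [lra|].
  pose proof (IH ltac:(intros; apply H; lia)). pose proof (H m ltac:(lia)). lra.
Qed.

Lemma rsum_nonneg m f : (forall i, (i < m)%nat -> 0 <= f i) -> 0 <= rsum m f.
Proof.
  induction m as [|m IH]; intros H; cbn [rsum]; [lra|].
  pose proof (IH ltac:(intros; apply H; lia)). pose proof (H m ltac:(lia)). lra.
Qed.

Lemma rsum_cauchy_schwarz m w a : (forall i, (i < m)%nat -> 0 <= w i) ->
  rsum m (fun i => w i * a i) ^ 2 <= rsum m w * rsum m (fun i => w i * a i ^ 2).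
Proof.
  induction m as [|m IH]; intros H; cbn [rsum]; [lra|].
  pose proof (IH ltac:(intros; apply H; lia)) as IHm.
  assert (HW : 0 <= rsum m w) by (apply rsum_nonneg; intros; apply H; lia).
  assert (HB : 0 <= rsum m (fun i => w i * a i ^ 2)).
  { apply rsum_nonneg. intros i Hi. apply Rmult_le_pos; [apply H; lia|apply pow2_ge_0]. }
  pose proof (H m ltac:(lia)) as Hw.
  set (A := rsum m (fun i => w i * a i)) in *.
  set (W := rsum m w) in *. set (S := rsum m (fun i => w i * a i ^ 2)) in *.
  assert (2 * a m * A <= W * a m ^ 2 + S).
  { destruct (Req_dec W 0) as [HW0|HW0].
    - assert (A = 0) by (rewrite HW0 in IHm; nra). nra.
    - pose proof (pow2_ge_0 (W * a m - A)). apply (Rmult_le_reg_l W); nra. }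
  nra.
Qed.

Lemma rsum_ext m f g : (forall i, (i < m)%nat -> f i = g i) -> rsum m f = rsum m g.
Proof.
  induction m as [|m IH]; intros H; cbn [rsum]; [reflexivity|].
  rewrite IH by (intros; apply H; lia). rewrite H by lia. reflexivity.
Qed.

Lemma rsum_lin m a b f g :
  rsum m (fun i => a * f i + b * g i) = a * rsum m f + b * rsum m g.
Proof. induction m as [|m IH]; cbn [rsum]; [|rewrite IH]; ring. Qed.

Lemma rsum_scal m a f : rsum m (fun i => a * f i) = a * rsum m f.
Proof. induction m as [|m IH]; cbn [rsum]; [|rewrite IH]; ring. Qed.

Lemma rsum_const m c : rsum m (fun _ => c) = INR m * c.
Proof. induction m as [|m IH]; cbn [rsum]; [simpl; ring|]. rewrite IH, S_INR. ring. Qed.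

Lemma rsum_telescope p (f : nat -> R) : rsum p (fun k => f k - f (S k)) = f 0%nat - f p.
Proof. induction p as [|p IH]; cbn [rsum]; [|rewrite IH]; ring. Qed.

Lemma rsum_term m f i : (forall j, (j < m)%nat -> 0 <= f j) -> (i < m)%nat -> f i <= rsum m f.
Proof.
  induction m as [|m IH]; intros H Hi; [lia|]. cbn [rsum].
  assert (0 <= rsum m f) by (apply rsum_nonneg; intros; apply H; lia).
  pose proof (H m ltac:(lia)).
  destruct (Nat.eq_dec i m) as [->|Hne]; [lra|].
  pose proof (IH ltac:(intros; apply H; lia) ltac:(lia)). lra.
Qed.

Lemma rsum_prefix_le k p f : (k <= p)%nat -> (forall j, (j < p)%nat -> 0 <= f j) ->
  rsum k f <= rsum p f.
Proof.
  intros Hk H. induction p as [|p IH].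
  - replace k with 0%nat by lia. lra.
  - destruct (Nat.eq_dec k (S p)) as [->|Hne]; [lra|]. cbn [rsum].
    pose proof (IH ltac:(lia) ltac:(intros; apply H; lia)). pose proof (H p ltac:(lia)). lra.
Qed.

Lemma rsum_sq_le p a : rsum p a ^ 2 <= INR p * rsum p (fun k => a k ^ 2).
Proof.
  pose proof (rsum_cauchy_schwarz p (fun _ => 1) a (fun _ _ => Rle_0_1)) as H.
  rewrite rsum_const, Rmult_1_r in H.
  rewrite (rsum_ext p (fun i => 1 * a i) a),
    (rsum_ext p (fun i => 1 * a i ^ 2) (fun k => a k ^ 2)) in H by (intros; ring).
  exact H.
Qed.

Lemma max_fin_le m f B : 0 <= B -> (forall i, (i < m)%nat -> f i <= B) -> max_fin m f <= B.
Proof.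
  induction m as [|m IH]; intros HB H; simpl; [lra|].
  apply Rmax_lub; [apply IH; auto|apply H; lia].
Qed.

Lemma geometric_eventually_lt (B q eps : R) :
  0 <= q < 1 -> 0 < eps -> exists N, forall n, (N <= n)%nat -> B * q ^ n < eps.
Proof.
  intros Hq He. pose proof (Rabs_pos B).
  destruct (pow_lt_1_zero q ltac:(rewrite Rabs_right; lra) (eps / (Rabs B + 1))
    ltac:(apply Rdiv_lt_0_compat; lra)) as [N HN].
  exists N. intros n Hn. specialize (HN n Hn).
  rewrite Rabs_right in HN by (apply Rle_ge, pow_le; lra).
  assert (B * q ^ n <= Rabs B * q ^ n)
    by (apply Rmult_le_compat_r; [apply pow_le; lra|apply Rle_abs]).
  assert (Rabs B * q ^ n <= Rabs B * (eps / (Rabs B + 1)))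
    by (apply Rmult_le_compat_l; lra).
  assert (Rabs B * (eps / (Rabs B + 1)) < eps); [|lra].
  apply (Rmult_lt_reg_r (Rabs B + 1)); [lra|]. field_simplify; lra.
Qed.

Lemma le_0_of_le_geometric (a B q : R) :
  0 <= q < 1 -> (forall n, a <= B * q ^ n) -> a <= 0.
Proof.
  intros Hq H. apply Rnot_lt_le. intros Ha.
  destruct (geometric_eventually_lt B q a Hq Ha) as [N HN].
  specialize (HN N (Nat.le_refl N)). specialize (H N). lra.
Qed.

Lemma bernoulli_ineq (t : R) (n : nat) : 0 <= t <= 1 -> 1 - INR n * t <= (1 - t) ^ n.
Proof.
  intros Ht. induction n as [|n IH]; [simpl; lra|].
  rewrite S_INR. cbn [pow]. pose proof (pos_INR n).
  assert (0 <= INR n * t * t) by (apply Rmult_le_pos; [apply Rmult_le_pos|]; lra).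
  assert ((1 - t) * (1 - INR n * t) <= (1 - t) * (1 - t) ^ n)
    by (apply Rmult_le_compat_l; lra).
  lra.
Qed.

Lemma pow_le_pow_of_le_1 (q : R) (n k : nat) : 0 <= q <= 1 -> (n <= k)%nat -> q ^ k <= q ^ n.
Proof.
  intros Hq Hnk. replace k with (n + (k - n))%nat by lia. rewrite pow_add.
  pose proof (pow_le q n ltac:(lra)).
  assert (q ^ (k - n) <= 1) by (rewrite <- (pow1 (k - n)); apply pow_incr; lra).
  nra.
Qed.

(* With q = 1 - (1 - r) / (2 p), Bernoulli gives q ^ p >= (1 + r) / 2 >= r, so a
   contraction by r over every window of length p is a geometric decay at rate q. *)
Lemma periodic_contraction_geometric (d : nat -> R) (p : nat) (r : R) :
  (1 <= p)%nat -> 0 <= r < 1 ->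
  (forall n, 0 <= d n) -> (forall n, d (S n) <= d n) ->
  (forall n, d (n + p)%nat <= r * d n) ->
  exists C q, 0 <= q < 1 /\ forall n, d n <= C * q ^ n.
Proof.
  intros Hp Hr Hd Hmono Hcontr.
  assert (HpR : 1 <= INR p) by (apply (le_INR 1); lia).
  set (t := (1 - r) / (2 * INR p)).
  assert (Ht : 0 < t <= / 2).
  { unfold t. split; [apply Rdiv_lt_0_compat; lra|].
    apply (Rmult_le_reg_r (2 * INR p)); [lra|]. field_simplify; lra. }
  set (q := 1 - t).
  assert (Hqp : r <= q ^ p).
  { pose proof (bernoulli_ineq t p ltac:(lra)) as Hb. fold q in Hb.
    assert (INR p * t = (1 - r) / 2) by (unfold t; field; lra). lra. }
  assert (Hqp0 : 0 < q ^ p) by (apply pow_lt; unfold q; lra).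
  set (C := d 0%nat / q ^ p).
  assert (HC : 0 <= C) by (apply Rle_mult_inv_pos; [apply Hd|exact Hqp0]).
  exists C, q. split; [unfold q; lra|].
  assert (Hd0 : forall n, d n <= d 0%nat).
  { induction n as [|n IH]; [lra|]. eapply Rle_trans; [apply Hmono|exact IH]. }
  intros n. induction n as [n IH] using lt_wf_ind.
  destruct (lt_dec n p) as [Hlt|Hge].
  - assert (d 0%nat = C * q ^ p) by (unfold C; field; lra).
    pose proof (pow_le_pow_of_le_1 q n p ltac:(unfold q; lra) ltac:(lia)).
    pose proof (Hd0 n). nra.
  - replace n with (n - p + p)%nat by lia.
    rewrite pow_add.
    pose proof (Hcontr (n - p)%nat). pose proof (IH (n - p)%nat ltac:(lia)).
    pose proof (Hd (n - p)%nat). pose proof (pow_le q (n - p) ltac:(unfold q; lra)).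
    assert (r * d (n - p)%nat <= q ^ p * (C * q ^ (n - p))) by (apply Rmult_le_compat; lra).
    nra.
Qed.

Lemma geometric_cauchy_limit (X : Hilbert) (x : nat -> X) (B q : R) :
  0 <= q < 1 -> (forall n k, hnorm (hsub (x (k + n)%nat) (x n)) <= B * q ^ n) ->
  exists l, forall n, hnorm (hsub (x n) l) <= B * q ^ n.
Proof.
  intros Hq Hx.
  assert (Hmono : forall a b, (b <= a)%nat -> hnorm (hsub (x a) (x b)) <= B * q ^ b).
  { intros a b Hab. replace a with (a - b + b)%nat by lia. apply Hx. }
  destruct (hcomplete X x) as [l Hl].
  - intros eps Heps. destruct (geometric_eventually_lt B q eps Hq Heps) as [N HN].
    exists N. intros a b Ha Hb. fold (hsub (x a) (x b)). fold (hnorm (hsub (x a) (x b))).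
    destruct (le_lt_dec b a).
    + pose proof (Hmono a b ltac:(lia)). pose proof (HN b Hb). lra.
    + rewrite hnorm_sub_sym. pose proof (Hmono b a ltac:(lia)). pose proof (HN a Ha). lra.
  - exists l. intros n. apply Rle_plus_epsilon. intros eps Heps.
    destruct (Hl eps ltac:(lra)) as [N HN].
    specialize (HN (Nat.max n N) ltac:(lia)).
    fold (hsub (x (Nat.max n N)) l) (hnorm (hsub (x (Nat.max n N)) l)) in HN.
    pose proof (hnorm_sub_triangle X (x n) (x (Nat.max n N)) l) as Htri.
    rewrite (hnorm_sub_sym X (x n) (x (Nat.max n N))) in Htri.
    pose proof (Hmono (Nat.max n N) n ltac:(lia)). lra.
Qed.

Section Fejer.
Variable X : Hilbert.
Variable Z : X -> Prop.
Variable x : nat -> X.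
Hypothesis Z_nonempty : exists z, Z z.
Hypothesis fejer : forall z n, Z z -> hnorm (hsub (x (S n)) z) <= hnorm (hsub (x n) z).

Lemma fejer_iter z n k : Z z -> hnorm (hsub (x (k + n)%nat) z) <= hnorm (hsub (x n) z).
Proof.
  intros Hz. induction k as [|k IH]; [simpl; lra|].
  eapply Rle_trans; [apply (fejer z (k + n)%nat Hz)|exact IH].
Qed.

Lemma dist_fejer_mono n : dist Z (x (S n)) <= dist Z (x n).
Proof.
  apply dist_glb; [exact Z_nonempty|]. intros z Hz.
  eapply Rle_trans; [apply (dist_le X Z Z_nonempty), Hz|apply fejer, Hz].
Qed.

Lemma fejer_shift_le_dist n k : hnorm (hsub (x (k + n)%nat) (x n)) <= 2 * dist Z (x n).
Proof.
  assert (/ 2 * hnorm (hsub (x (k + n)%nat) (x n)) <= dist Z (x n)); [|lra].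
  apply dist_glb; [exact Z_nonempty|]. intros z Hz.
  pose proof (hnorm_sub_triangle X (x (k + n)%nat) z (x n)).
  pose proof (fejer_iter z n k Hz). rewrite (hnorm_sub_sym X z (x n)) in *. lra.
Qed.

(* The first hypothesis is the closedness of [Z]. *)
Lemma fejer_linear_convergence (C q : R) :
  (forall l, dist Z l = 0 -> Z l) -> 0 <= q < 1 ->
  (forall n, dist Z (x n) <= C * q ^ n) ->
  exists l, Z l /\ forall n, hnorm (hsub (x n) l) <= 2 * C * q ^ n.
Proof.
  intros Zclosed Hq Hdist.
  destruct (geometric_cauchy_limit X x (2 * C) q Hq) as [l Hl].
  { intros n k. pose proof (fejer_shift_le_dist n k). pose proof (Hdist n). lra. }
  exists l. split; [|exact Hl].
  apply Zclosed, Rle_antisym; [|apply dist_nonneg, Z_nonempty].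
  apply (le_0_of_le_geometric _ (3 * C) q Hq). intros n.
  pose proof (dist_lipschitz X Z Z_nonempty (x n) l) as Hlip.
  rewrite hnorm_sub_sym in Hlip. pose proof (Hl n). pose proof (Hdist n). lra.
Qed.
End Fejer.

Lemma uniform_regularity_on_ball (X : Hilbert) (m : nat) (T : nat -> X -> X) (rho : R) :
  (forall i, (i < m)%nat -> bdd_lin_regular_op (T i)) -> rho > 0 ->
  exists kappa, 0 <= kappa /\ forall i, (i < m)%nat -> forall y, hnorm y <= rho ->
    dist (Fix (T i)) y <= kappa * hnorm (hsub y (T i y)).
Proof.
  intros Hreg Hrho. apply uniform_constant.
  - intros i a b Hab H y Hy. pose proof (hnorm_nonneg X (hsub y (T i y))).
    pose proof (H y Hy). nra.
  - intros i Hi. destruct (Hreg i Hi) as [_ Hball]. destruct (Hball rho Hrho) as [k [_ Hk]].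
    exists k. exact Hk.
Qed.

Section Iteration.
Variables (X : Hilbert) (m : nat) (T : nat -> X -> X) (omega : nat -> nat -> R)
  (x : nat -> X) (c : R).
Hypothesis omega_range : forall i n, (i < m)%nat -> 0 <= omega i n <= 1.
Hypothesis omega_sum : forall n, rsum m (fun i => omega i n) = 1.
Hypothesis x_succ : forall n, x (S n) = vsum m (fun i => hscal X (omega i n) (T i (x n))).
Hypothesis c_pos : 0 < c.
Hypothesis T_sqne : forall i, (i < m)%nat -> strongly_quasi_nonexpansive X c (T i).

Local Notation Z := (inter_fam m (fun i => Fix (T i))).

Definition residual i n := hnorm (hsub (x n) (T i (x n))).
Definition mean_residual n := rsum m (fun i => omega i n * residual i n).
Definition mean_sq_residual n := rsum m (fun i => omega i n * residual i n ^ 2).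

Lemma weighted_mean_sq_le n (a : nat -> R) :
  rsum m (fun i => omega i n * a i) ^ 2 <= rsum m (fun i => omega i n * a i ^ 2).
Proof.
  pose proof (rsum_cauchy_schwarz m (fun i => omega i n) a) as H.
  rewrite omega_sum, Rmult_1_l in H. apply H. intros i Hi. apply omega_range, Hi.
Qed.

Lemma hnorm_weighted_sum n (f : nat -> X) :
  hnorm (vsum m (fun i => hscal X (omega i n) (f i))) <=
  rsum m (fun i => omega i n * hnorm (f i)).
Proof.
  eapply Rle_trans; [apply hnorm_vsum|]. apply rsum_le. intros i Hi.
  rewrite hnorm_scal, Rabs_right; [lra|]. apply Rle_ge, omega_range, Hi.
Qed.

Lemma x_succ_sub z n :
  hsub (x (S n)) z = vsum m (fun i => hscal X (omega i n) (hsub (T i (x n)) z)).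
Proof. rewrite x_succ, <- hsub_vsum, omega_sum, hscal_one. reflexivity. Qed.

Lemma mean_sq_residual_nonneg n : 0 <= mean_sq_residual n.
Proof.
  apply rsum_nonneg. intros i Hi.
  apply Rmult_le_pos; [apply omega_range, Hi|apply pow2_ge_0].
Qed.

Lemma mean_residual_nonneg n : 0 <= mean_residual n.
Proof.
  apply rsum_nonneg. intros i Hi.
  apply Rmult_le_pos; [apply omega_range, Hi|apply hnorm_nonneg].
Qed.

Lemma fejer_step z n : Z z ->
  hnorm (hsub (x (S n)) z) ^ 2 <= hnorm (hsub (x n) z) ^ 2 - c * mean_sq_residual n.
Proof.
  intros Hz.
  set (a := fun i => hnorm (hsub (T i (x n)) z)).
  assert (H1 : hnorm (hsub (x (S n)) z) <= rsum m (fun i => omega i n * a i))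
    by (rewrite x_succ_sub; apply hnorm_weighted_sum).
  assert (H2 : rsum m (fun i => omega i n * a i ^ 2) <=
    rsum m (fun i => hnorm (hsub (x n) z) ^ 2 * omega i n
                     + (- c) * (omega i n * residual i n ^ 2))).
  { apply rsum_le. intros i Hi. pose proof (T_sqne i Hi (x n) z (Hz i Hi)).
    pose proof (omega_range i n Hi). unfold a, residual.
    assert (omega i n * hnorm (hsub (T i (x n)) z) ^ 2 <=
      omega i n * (hnorm (hsub (x n) z) ^ 2 - c * hnorm (hsub (x n) (T i (x n))) ^ 2))
      by (apply Rmult_le_compat_l; lra).
    lra. }
  rewrite rsum_lin, omega_sum in H2. fold (mean_sq_residual n) in H2.
  pose proof (weighted_mean_sq_le n a).
  assert (hnorm (hsub (x (S n)) z) ^ 2 <= rsum m (fun i => omega i n * a i) ^ 2)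
    by (apply pow_incr; split; [apply hnorm_nonneg|exact H1]).
  lra.
Qed.

Lemma fejer_monotone z n : Z z -> hnorm (hsub (x (S n)) z) <= hnorm (hsub (x n) z).
Proof.
  intros Hz. apply hnorm_le_of_sq; [apply hnorm_nonneg|].
  pose proof (fejer_step z n Hz). pose proof (mean_sq_residual_nonneg n).
  assert (0 <= c * mean_sq_residual n) by (apply Rmult_le_pos; lra). lra.
Qed.

Lemma step_le_mean_residual n : hnorm (hsub (x (S n)) (x n)) <= mean_residual n.
Proof.
  rewrite x_succ_sub. eapply Rle_trans; [apply hnorm_weighted_sum|].
  apply rsum_le. intros i Hi. unfold residual. rewrite hnorm_sub_sym. lra.
Qed.

Lemma mean_residual_sq_le n : mean_residual n ^ 2 <= mean_sq_residual n.
Proof. apply weighted_mean_sq_le. Qed.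

Lemma shift_le_sum_mean_residual n k :
  hnorm (hsub (x (n + k)%nat) (x n)) <= rsum k (fun j => mean_residual (n + j)).
Proof.
  induction k as [|k IH]; cbn [rsum].
  - rewrite Nat.add_0_r. unfold hsub. rewrite hadd_opp, hnorm_zero. lra.
  - rewrite Nat.add_succ_r.
    pose proof (hnorm_sub_triangle X (x (S (n + k))) (x (n + k)%nat) (x n)).
    pose proof (step_le_mean_residual (n + k)). lra.
Qed.

Lemma fejer_telescope z n p : Z z ->
  c * rsum p (fun k => mean_sq_residual (n + k)) <=
  hnorm (hsub (x n) z) ^ 2 - hnorm (hsub (x (n + p)%nat) z) ^ 2.
Proof.
  intros Hz. rewrite <- rsum_scal.
  set (e := fun k => hnorm (hsub (x (n + k)%nat) z) ^ 2).
  replace (hnorm (hsub (x n) z) ^ 2) with (e 0%nat) by (unfold e; rewrite Nat.add_0_r; reflexivity).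
  fold (e p). rewrite <- rsum_telescope. apply rsum_le. intros k _.
  unfold e. rewrite Nat.add_succ_r. pose proof (fejer_step z (n + k) Hz). lra.
Qed.

Lemma iterates_bounded : (exists z, Z z) -> exists rho, rho > 0 /\ forall n, hnorm (x n) <= rho.
Proof.
  intros [z0 Hz0]. exists (hnorm (hsub (x 0%nat) z0) + hnorm z0 + 1).
  pose proof (hnorm_nonneg X (hsub (x 0%nat) z0)). pose proof (hnorm_nonneg X z0).
  split; [lra|]. intros n.
  replace (x n) with (hadd X (hsub (x n) z0) z0) at 1 by vector_eq.
  eapply Rle_trans; [apply hnorm_triangle|].
  pose proof (fejer_iter X Z x fejer_monotone z0 0 n Hz0) as Hiter.
  rewrite Nat.add_0_r in Hiter. lra.
Qed.

Lemma fix_set_closed l : (exists z, Z z) -> dist Z l = 0 -> Z l.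
Proof.
  intros HZ Hl i Hi. apply (fix_of_dist_eq0 X Z HZ (T i) l); [|exact Hl].
  intros y z Hz. apply (strongly_quasi_nonexpansive_dist X c); [lra|apply T_sqne, Hi|apply Hz, Hi].
Qed.

Section Regularity.
Variables (p : nat) (delta kappa mu : R).
Hypothesis Z_nonempty : exists z, Z z.
Hypothesis delta_pos : 0 < delta.
Hypothesis omega_lower : forall n i, (i < m)%nat -> omega i n > 0 -> delta <= omega i n.
Hypothesis window_cover :
  forall n i, (i < m)%nat -> exists k, (k < p)%nat /\ omega i (n + k)%nat > 0.
Hypothesis kappa_nonneg : 0 <= kappa.
Hypothesis T_regular :
  forall i n, (i < m)%nat -> dist (Fix (T i)) (x n) <= kappa * residual i n.
Hypothesis mu_nonneg : 0 <= mu.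
Hypothesis family_regular :
  forall n, dist Z (x n) <= mu * max_fin m (fun i => dist (Fix (T i)) (x n)).

Definition window_residual n := rsum p (fun k => mean_residual (n + k)).

Lemma window_residual_nonneg n : 0 <= window_residual n.
Proof. apply rsum_nonneg. intros. apply mean_residual_nonneg. Qed.

Lemma residual_le_window n i k : (i < m)%nat -> (k < p)%nat -> omega i (n + k)%nat > 0 ->
  delta * residual i (n + k) <= window_residual n.
Proof.
  intros Hi Hk Hpos.
  assert (delta * residual i (n + k) <= omega i (n + k)%nat * residual i (n + k))
    by (apply Rmult_le_compat_r; [apply hnorm_nonneg|apply omega_lower; assumption]).
  assert (omega i (n + k)%nat * residual i (n + k) <= mean_residual (n + k)).
  { apply (rsum_term m (fun j => omega j (n + k)%nat * residual j (n + k))); [|exact Hi].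
    intros j Hj. apply Rmult_le_pos; [apply omega_range, Hj|apply hnorm_nonneg]. }
  assert (mean_residual (n + k) <= window_residual n).
  { apply (rsum_term p (fun j => mean_residual (n + j))); [|exact Hk].
    intros. apply mean_residual_nonneg. }
  lra.
Qed.

(* Every operator is active somewhere in the window [n, n + p), and the iterates move
   by at most the accumulated mean residual inside the window. *)
Lemma dist_fix_le_window n i : (i < m)%nat ->
  dist (Fix (T i)) (x n) <= (1 + kappa / delta) * window_residual n.
Proof.
  intros Hi. destruct (window_cover n i Hi) as [k [Hk Hpos]].
  assert (HZi : exists z, Fix (T i) z) by (destruct Z_nonempty as [z Hz]; exists z; apply Hz, Hi).
  pose proof (dist_lipschitz X _ HZi (x (n + k)%nat) (x n)) as Hlip.
  rewrite hnorm_sub_sym in Hlip.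
  pose proof (shift_le_sum_mean_residual n k).
  assert (rsum k (fun j => mean_residual (n + j)) <= window_residual n)
    by (apply rsum_prefix_le; [lia|intros; apply mean_residual_nonneg]).
  pose proof (T_regular i (n + k) Hi).
  pose proof (residual_le_window n i k Hi Hk Hpos).
  assert (kappa * residual i (n + k) <= kappa / delta * window_residual n).
  { unfold Rdiv. rewrite Rmult_assoc. apply Rmult_le_compat_l; [lra|].
    apply (Rmult_le_reg_l delta); [lra|]. field_simplify; lra. }
  lra.
Qed.

Lemma dist_le_window n : dist Z (x n) <= mu * (1 + kappa / delta) * window_residual n.
Proof.
  eapply Rle_trans; [apply family_regular|]. rewrite Rmult_assoc.
  apply Rmult_le_compat_l; [exact mu_nonneg|].
  apply max_fin_le; [|intros i Hi; apply dist_fix_le_window, Hi].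
  apply Rmult_le_pos; [|apply window_residual_nonneg].
  pose proof (Rle_mult_inv_pos kappa delta kappa_nonneg delta_pos). unfold Rdiv. lra.
Qed.

Lemma window_sq_le z n : Z z ->
  c * window_residual n ^ 2 <=
  INR p * (hnorm (hsub (x n) z) ^ 2 - hnorm (hsub (x (n + p)%nat) z) ^ 2).
Proof.
  intros Hz. pose proof (fejer_telescope z n p Hz) as Htel.
  set (S := rsum p (fun k => mean_sq_residual (n + k))) in *.
  pose proof (rsum_sq_le p (fun k => mean_residual (n + k))) as Hsq.
  fold (window_residual n) in Hsq.
  assert (rsum p (fun k => mean_residual (n + k) ^ 2) <= S)
    by (apply rsum_le; intros; apply mean_residual_sq_le).
  pose proof (pos_INR p).
  assert (window_residual n ^ 2 <= INR p * S)
    by (eapply Rle_trans; [exact Hsq|apply Rmult_le_compat_l; assumption]).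
  assert (c * window_residual n ^ 2 <= c * (INR p * S)) by (apply Rmult_le_compat_l; lra).
  assert (INR p * (c * S) <=
          INR p * (hnorm (hsub (x n) z) ^ 2 - hnorm (hsub (x (n + p)%nat) z) ^ 2))
    by (apply Rmult_le_compat_l; lra).
  lra.
Qed.

Lemma dist_sq_le_fejer_gap z n : Z z ->
  dist Z (x n) ^ 2 <= (mu * (1 + kappa / delta)) ^ 2 * INR p / c *
    (hnorm (hsub (x n) z) ^ 2 - hnorm (hsub (x (n + p)%nat) z) ^ 2).
Proof.
  intros Hz. set (M := mu * (1 + kappa / delta)).
  pose proof (window_sq_le z n Hz) as Hw.
  assert (dist Z (x n) ^ 2 <= M ^ 2 * window_residual n ^ 2).
  { rewrite <- Rpow_mult_distr. apply pow_incr.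
    split; [apply dist_nonneg, Z_nonempty|apply dist_le_window]. }
  assert (M ^ 2 * window_residual n ^ 2 <= M ^ 2 / c * (c * window_residual n ^ 2))
    by (right; field; lra).
  assert (M ^ 2 / c * (c * window_residual n ^ 2) <= M ^ 2 / c *
      (INR p * (hnorm (hsub (x n) z) ^ 2 - hnorm (hsub (x (n + p)%nat) z) ^ 2)))
    by (apply Rmult_le_compat_l; [apply Rle_mult_inv_pos; [apply pow2_ge_0|lra]|exact Hw]).
  unfold Rdiv in *. lra.
Qed.

(* Since d(x_n)^2 <= K (|x_n - z|^2 - |x_(n+p) - z|^2) for all z in Z, the point z
   also witnesses d(x_(n+p))^2 + d(x_n)^2 / K <= |x_n - z|^2; taking the infimum over z
   gives d(x_(n+p))^2 <= (1 - 1/K) d(x_n)^2 <= (1 - 1/(2K))^2 d(x_n)^2. *)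
Lemma dist_window_contraction :
  exists r, 0 <= r < 1 /\ forall n, dist Z (x (n + p)%nat) <= r * dist Z (x n).
Proof.
  set (K := (mu * (1 + kappa / delta)) ^ 2 * INR p / c + 1).
  assert (HK : 1 <= K).
  { assert (0 <= (mu * (1 + kappa / delta)) ^ 2 * INR p / c); [|unfold K; lra].
    apply Rle_mult_inv_pos; [apply Rmult_le_pos; [apply pow2_ge_0|apply pos_INR]|lra]. }
  exists (1 - / (2 * K)).
  assert (0 < / (2 * K) <= / 2) by (split; [apply Rinv_0_lt_compat|apply Rinv_le_contravar]; lra).
  split; [lra|]. intros n.
  set (a := dist Z (x n)). set (b := dist Z (x (n + p)%nat)).
  assert (Ha : 0 <= a) by apply dist_nonneg, Z_nonempty.
  assert (Hb : 0 <= b) by apply dist_nonneg, Z_nonempty.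
  assert (Hsq : b ^ 2 + a ^ 2 / K <= a ^ 2).
  { apply dist_sq_glb; [exact Z_nonempty| |].
    { pose proof (pow2_ge_0 a). pose proof (pow2_ge_0 b).
      assert (0 <= a ^ 2 / K) by (apply Rle_mult_inv_pos; lra). lra. }
    intros z Hz.
    assert (b ^ 2 <= hnorm (hsub (x (n + p)%nat) z) ^ 2)
      by (apply pow_incr; split; [exact Hb|apply dist_le; assumption]).
    pose proof (dist_sq_le_fejer_gap z n Hz) as Hgap. fold a in Hgap.
    pose proof (fejer_iter X Z x fejer_monotone z n p Hz) as Hmono.
    replace (p + n)%nat with (n + p)%nat in Hmono by lia.
    set (G := hnorm (hsub (x n) z) ^ 2 - hnorm (hsub (x (n + p)%nat) z) ^ 2) in *.
    assert (HG : 0 <= G).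
    { pose proof (hnorm_nonneg X (hsub (x (n + p)%nat) z)). unfold G. nra. }
    assert (a ^ 2 / K <= G).
    { apply (Rmult_le_reg_l K); [lra|]. field_simplify; [|lra]. unfold K. nra. }
    unfold G in *. lra. }
  apply Rsqr_incr_0_var; [|apply Rmult_le_pos; lra].
  rewrite !Rsqr_pow2. unfold Rdiv in Hsq.
  assert (Hhalf : / (2 * K) = / 2 * / K) by (field; lra). rewrite Hhalf.
  assert (0 < / K) by (apply Rinv_0_lt_compat; lra).
  pose proof (pow2_ge_0 a). nra.
Qed.
End Regularity.
End Iteration.

Theorem theorem6p1 (X : Hilbert) (m : nat) (T : nat -> X -> X)
  (omega : nat -> nat -> R) (x : nat -> X)
  (HT_avg : forall i, (i < m)%nat -> averaged_nonexpansive (T i))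
  (HT_reg : forall i, (i < m)%nat -> bdd_lin_regular_op (T i))
  (HZ : exists z, inter_fam m (fun i => Fix (T i)) z)
  (Hfam : bdd_lin_regular_fam m (fun i => Fix (T i)))
  (Hom01 : forall i n, (i < m)%nat -> 0 <= omega i n <= 1)
  (Hsum : forall n, rsum m (fun i => omega i n) = 1)
  (Hplus : exists delta, delta > 0 /\
     forall n i, (i < m)%nat -> omega i n > 0 -> delta <= omega i n)
  (Hcover : exists p : nat, (p >= 1)%nat /\
     forall n i, (i < m)%nat -> exists k, (k < p)%nat /\ omega i (n + k)%nat > 0)
  (Hx : forall n, x (S n) = vsum m (fun i => hscal X (omega i n) (T i (x n)))) :
  exists z, inter_fam m (fun i => Fix (T i)) z /\
    exists c q, c >= 0 /\ 0 <= q < 1 /\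
      forall n, hnorm (hsub (x n) z) <= c * q ^ n.
Proof.
  destruct (averaged_family_uniform X m T HT_avg) as [c [Hc HTc]].
  pose proof (fejer_monotone X m T omega x c Hom01 Hsum Hx Hc HTc) as Hfejer.
  destruct Hplus as [delta [Hdelta Hlower]], Hcover as [p [Hp Hcov]].
  set (Z := inter_fam m (fun i => Fix (T i))) in *.
  destruct (iterates_bounded X m T omega x c Hom01 Hsum Hx Hc HTc HZ)
    as [rho [Hrho Hbounded]].
  destruct (uniform_regularity_on_ball X m T rho HT_reg Hrho) as [kappa [Hkappa HTkappa]].
  destruct (Hfam rho Hrho) as [mu [Hmu Hmuf]].
  destruct (dist_window_contraction X m T omega x c Hom01 Hsum Hx Hc HTc p delta kappa mu
    HZ Hdelta Hlower Hcov Hkappa (fun i n Hi => HTkappa i Hi (x n) (Hbounded n))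
    ltac:(lra) (fun n => Hmuf (x n) (Hbounded n))) as [r [Hr Hcontr]].
  destruct (periodic_contraction_geometric (fun n => dist Z (x n)) p r Hp Hr
    (fun n => dist_nonneg X Z HZ (x n)) (dist_fejer_mono X Z x HZ Hfejer) Hcontr)
    as [C [q [Hq Hdecay]]].
  destruct (fejer_linear_convergence X Z x HZ Hfejer C q
    (fun l => fix_set_closed X m T c Hc HTc l HZ) Hq Hdecay) as [l [Hl Hrate]].
  exists l. split; [exact Hl|]. exists (2 * C), q. split; [|split; [exact Hq|exact Hrate]].
  pose proof (Hdecay 0%nat). pose proof (dist_nonneg X Z HZ (x 0%nat)). simpl in *. lra.
Qed.
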